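(* The functional $\tilde J:\mathcal F\times[0,+\infty)\to\mathbb{R}$, $\tilde J(f,c)=\frac12c^3I_1(f)-\frac12c^2gAI_2(f)$, has a unique global minimum at $(\mathrm{id},\frac23gA)$, where $\mathrm{id}(y)=y$.
   Context: $g>0$, $A\in(0,1)$ constants. $\mathcal F$ is the set of $f\in\mathcal C^1([-1,1])$ with $f(\pm1)=\pm1$, $f'(\pm1)>0$, $f(y)\in(-1,1)$ and $f(-y)=-f(y)$ for $y\in(-1,1)$. For $f\in\mathcal F$ let $F(y):=\int_{-1}^yf'(s)s\,ds$, $I_1(f):=\int_0^1\frac{F(y)^2}{1-f(y)^2}\,dy$ and $I_2(f):=\int_0^1(1-f(y))y\,dy$. *)

From Stdlib Require Import Reals.
From Coquelicot Require Import Coquelicot.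
Open Scope R_scope.

Definition Icl (y : R) : Prop := -1 <= y <= 1.

(* f is C^1 on [-1,1] with derivative df: f is continuous on [-1,1],
   differentiable on (-1,1) with derivative df, and df extends continuously
   to [-1,1].  df(-1), df(1) are then the one-sided derivatives f'(-1), f'(1). *)
Definition C1_on_I (f df : R -> R) : Prop :=
  (forall y, Icl y -> filterlim f (within Icl (locally y)) (locally (f y))) /\
  (forall y, -1 < y < 1 -> is_derive f y (df y)) /\
  (forall y, Icl y -> filterlim df (within Icl (locally y)) (locally (df y))).

Definition inF (f df : R -> R) : Prop :=
  C1_on_I f df /\
  f (-1) = -1 /\ f 1 = 1 /\
  df (-1) > 0 /\ df 1 > 0 /\
  (forall y, -1 < y < 1 -> -1 < f y < 1) /\
  (forall y, -1 < y < 1 -> f (- y) = - f y).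

Definition Fprim (df : R -> R) (y : R) : R := RInt (fun s => df s * s) (-1) y.

Definition I1 (f df : R -> R) : R :=
  RInt (fun y => (Fprim df y) ^ 2 / (1 - (f y) ^ 2)) 0 1.

Definition I2 (f : R -> R) : R := RInt (fun y => (1 - f y) * y) 0 1.

Definition Jt (g A : R) (f df : R -> R) (c : R) : R :=
  1/2 * c ^ 3 * I1 f df - 1/2 * c ^ 2 * g * A * I2 f.

From Stdlib Require Import Reals Psatz.
From Coquelicot Require Import Coquelicot.
Open Scope R_scope.

(* Write [k = g A] and [h = 1 - f].  Integration by parts and the oddness of [f]
   give [F(1) = 0] and [\int_0^1 (F + 2 y h) = 0].  Minimising
   [c^3 F^2 / (1 - f^2) + (2/3) c^2 k F] pointwise in [F] therefore bounds
   [c^3 I_1 - c^2 k I_2] below by [\int_0^1 (c k / 9) (k h^2 + (3 c y - 2 k) h)],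
   and completing the square in [h] shows that this is at least [-2 k^3 / 81],
   with equality only when [3 c = 2 k] and [h = 1 - y].  Since
   [\tilde J = (c^3 I_1 - c^2 k I_2) / 2] and [\tilde J(id, 2k/3) = -k^3/81], this
   is the claim.  The integrand of [I_1] is continuous up to [y = 1] because
   [f'(1) > 0]: there [F(y) = O(1 - y)] while [1 - f(y)^2 >= c' (1 - y)]. *)

(* Matching on the head symbol first matters: [apply continuous_plus] on a
   product makes the unifier unfold the definitions of the real operations. *)
Ltac solve_continuous :=
  repeat match goal with
  | |- continuous (fun _ => Rplus _ _) _ =>
      apply (@continuous_plus R_UniformSpace R_AbsRing R_NormedModule)
  | |- continuous (fun _ => Rminus _ _) _ =>
      apply (@continuous_minus R_UniformSpace R_AbsRing R_NormedModule)
  | |- continuous (fun _ => Rmult _ _) _ =>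
      apply (@continuous_mult R_UniformSpace R_AbsRing)
  | |- continuous (fun y => pow (@?h y) ?n) _ =>
      apply (continuous_comp h (fun t => t ^ n));
      [| apply (@ex_derive_continuous R_AbsRing R_NormedModule); auto_derive; exact I]
  | |- continuous (fun _ => Rdiv _ _) _ => unfold Rdiv
  | |- continuous (Rplus ?a) _ =>
      apply (@continuous_plus R_UniformSpace R_AbsRing R_NormedModule (fun _ => a) (fun y => y))
  | |- continuous (Rminus ?a) _ =>
      apply (@continuous_minus R_UniformSpace R_AbsRing R_NormedModule (fun _ => a) (fun y => y))
  | |- continuous (Rmult ?a) _ =>
      apply (@continuous_mult R_UniformSpace R_AbsRing (fun _ => a) (fun y => y))
  | |- continuous (fun x => x) _ => apply continuous_id
  | |- continuous (fun _ => _) _ => apply continuous_const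
  | H : forall x, continuous ?h x |- continuous ?h _ => apply H
  | |- continuous _ _ => assumption
  end.

(* Equations between Coquelicot integrals live in the carrier of
   [R_CompleteNormedModule], whereas [ring] and [field] only recognise [@eq R]. *)
Ltac as_R_eq := match goal with |- ?x = ?y => change (@eq R x y) end.

Lemma ball_Rabs (x e y : R) : ball x e y <-> Rabs (y - x) < e.
Proof. reflexivity. Qed.

Lemma continuous_of_local_bound (q : R -> R) (x C : R) :
  locally x (fun y => Rabs (q y - q x) <= C * Rabs (y - x)) -> continuous q x.
Proof.
  intros [d Hd]. apply filterlim_locally. intros eps.
  pose proof (cond_pos d). pose proof (cond_pos eps). pose proof (Rabs_pos C).
  assert (Hdelta : 0 < Rmin d (eps / (Rabs C + 1))).
  { apply Rmin_pos; [lra | apply Rdiv_lt_0_compat; lra]. }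
  exists (mkposreal _ Hdelta). intros y Hy. apply (proj1 (ball_Rabs _ _ _)) in Hy; simpl in Hy.
  apply (proj2 (ball_Rabs _ _ _)).
  pose proof (Rmin_l d (eps / (Rabs C + 1))). pose proof (Rmin_r d (eps / (Rabs C + 1))).
  assert (Hyx : Rabs (y - x) * (Rabs C + 1) < eps).
  { replace (pos eps) with (eps / (Rabs C + 1) * (Rabs C + 1)) by (field; lra).
    apply Rmult_lt_compat_r; lra. }
  assert (Hq : Rabs (q y - q x) <= C * Rabs (y - x)) by (apply Hd, (proj2 (ball_Rabs _ _ _)); lra).
  pose proof (Rle_abs C). pose proof (Rabs_pos (y - x)). nra.
Qed.

Lemma ex_RInt_of_continuous (h : R -> R) (a b : R) :
  (forall x, continuous h x) -> ex_RInt h a b.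
Proof.
  intros Hc. apply (ex_RInt_continuous (V := R_CompleteNormedModule)). intros; apply Hc.
Qed.

Lemma is_derive_RInt_upper (h : R -> R) (a x : R) :
  (forall y, continuous h y) -> is_derive (RInt h a) x (h x).
Proof.
  intros Hc. apply (is_derive_RInt h (RInt h a) a x); [| apply Hc].
  apply filter_forall. intros y. apply (RInt_correct (V := R_CompleteNormedModule)).
  now apply ex_RInt_of_continuous.
Qed.

Lemma continuous_RInt_upper (h : R -> R) (a x : R) :
  (forall y, continuous h y) -> continuous (RInt h a) x.
Proof.
  intros Hc. apply (@ex_derive_continuous R_AbsRing R_NormedModule).
  exists (h x). now apply is_derive_RInt_upper.
Qed.

Lemma RInt_interior_derive (P p : R -> R) (a b : R) : a <= b ->
  (forall x, a <= x <= b -> continuous P x) -> (forall x, continuous p x) ->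
  (forall x, a < x < b -> is_derive P x (p x)) -> RInt p a b = P b - P a.
Proof.
  intros hab HP Hp HdP.
  assert (HdI : forall x, is_derive (RInt p a) x (p x))
    by (intros x; now apply is_derive_RInt_upper).
  destruct (MVT_gen (fun x => P x - RInt p a x) a b (fun _ => 0)) as [c [_ Hc]].
  - rewrite Rmin_left, Rmax_right by lra. intros x Hx.
    replace 0 with (p x - p x) by ring.
    exact (is_derive_minus P (RInt p a) x (p x) (p x) (HdP x Hx) (HdI x)).
  - rewrite Rmin_left, Rmax_right by lra. intros x Hx.
    apply continuity_pt_filterlim.
    apply (@continuous_minus R_UniformSpace R_AbsRing R_NormedModule).
    + now apply HP.
    + apply (@ex_derive_continuous R_AbsRing R_NormedModule). now exists (p x).
  - rewrite RInt_point in Hc. change (@zero R_CompleteNormedModule) with 0 in Hc. lra.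
Qed.

Lemma RInt_of_derive (P p : R -> R) (a b : R) :
  (forall x, is_derive P x (p x)) -> (forall x, continuous p x) -> RInt p a b = P b - P a.
Proof. intros Hd Hc. apply is_RInt_unique, (is_RInt_derive P p); auto. Qed.

Lemma RInt_lincomb (p r : R -> R) (a b al be : R) : ex_RInt p a b -> ex_RInt r a b ->
  RInt (fun x => al * p x + be * r x) a b = al * RInt p a b + be * RInt r a b.
Proof.
  intros Hp Hr. apply is_RInt_unique.
  exact (is_RInt_plus _ _ a b _ _ (is_RInt_scal p a b al _ (RInt_correct p a b Hp))
                                  (is_RInt_scal r a b be _ (RInt_correct r a b Hr))).
Qed.

Lemma RInt_le_bounds (h : R -> R) (a b m M : R) : a <= b -> (forall x, continuous h x) ->
  (forall x, a < x < b -> m <= h x <= M) -> m * (b - a) <= RInt h a b <= M * (b - a).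
Proof.
  intros hab Hc Hb.
  assert (Hconst : forall v, RInt (fun _ => v) a b = v * (b - a)).
  { intros v. rewrite RInt_const. unfold scal; simpl; unfold mult; simpl. ring. }
  split; [rewrite <- Hconst | rewrite <- (Hconst M)];
    apply RInt_le; auto using ex_RInt_of_continuous, ex_RInt_const;
    intros x Hx; apply Hb in Hx; lra.
Qed.

Lemma RInt_odd (h : R -> R) (a : R) : 0 <= a -> ex_RInt h (- a) a ->
  (forall y, - a < y < a -> h (- y) = - h y) -> RInt h (- a) a = 0.
Proof.
  intros ha Hex Hodd.
  pose proof (RInt_comp_lin (V := R_CompleteNormedModule) h (-1) 0 (- a) a) as Hlin.
  replace (-1 * - a + 0) with a in Hlin by ring.
  replace (-1 * a + 0) with (- a) in Hlin by ring.
  specialize (Hlin (ex_RInt_swap _ _ _ Hex)).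
  rewrite <- (opp_RInt_swap h (- a) a Hex) in Hlin.
  rewrite (RInt_ext _ h) in Hlin.
  - change opp with Ropp in Hlin. simpl in Hlin. lra.
  - rewrite Rmin_left, Rmax_right by lra. intros y Hy.
    unfold scal; simpl; unfold mult; simpl.
    replace (-1 * y + 0) with (- y) by ring. rewrite Hodd by lra. ring.
Qed.

(* The primitive of [h] is nondecreasing on [[a, b]] and vanishes at both ends,
   so it is locally constant inside and its derivative [h] vanishes there. *)
Lemma RInt_nonneg_eq_0 (h : R -> R) (a b : R) : a <= b -> (forall x, continuous h x) ->
  (forall x, a < x < b -> 0 <= h x) -> RInt h a b = 0 -> forall x, a < x < b -> h x = 0.
Proof.
  intros hab Hc Hnn H0 z Hz.
  assert (Hex : forall s t, ex_RInt h s t) by (intros; now apply ex_RInt_of_continuous).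
  assert (Hflat : forall y, a < y < b -> RInt h a y = 0).
  { intros y Hy.
    pose proof (RInt_Chasles h a y b (Hex a y) (Hex y b)) as Hsplit.
    pose proof (RInt_ge_0 h a y ltac:(lra) (Hex a y) (fun x Hx => Hnn x ltac:(lra))).
    pose proof (RInt_ge_0 h y b ltac:(lra) (Hex y b) (fun x Hx => Hnn x ltac:(lra))).
    change plus with Rplus in Hsplit. simpl in Hsplit. lra. }
  assert (Hd0 : is_derive (RInt h a) z 0).
  { apply (is_derive_ext_loc (fun _ => 0)).
    - apply (locally_interval _ z a b); simpl; try lra.
      intros y Hya Hyb. symmetry. now apply Hflat.
    - apply (is_derive_const (K := R_AbsRing) (V := R_NormedModule)). }
  assert (Hdh : is_derive (RInt h a) z (h z)) by now apply is_derive_RInt_upper.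
  rewrite <- (is_derive_unique _ _ _ Hdh). exact (is_derive_unique _ _ _ Hd0).
Qed.

(* Extension of a function given on [[-1, 1]] by constants: it turns the
   one-sided regularity of [C1_on_I] into continuity on all of [R], which is
   what Coquelicot's integration lemmas ask for. *)
Definition clamp (y : R) : R := Rmax (-1) (Rmin 1 y).

Definition clamped (h : R -> R) (y : R) : R := h (clamp y).

Lemma clamp_Icl (y : R) : Icl (clamp y).
Proof. unfold clamp, Icl, Rmax, Rmin. repeat destruct Rle_dec; lra. Qed.

Lemma clamp_id (y : R) : Icl y -> clamp y = y.
Proof. unfold clamp, Icl, Rmax, Rmin. repeat destruct Rle_dec; lra. Qed.

Lemma clamp_ge_1 (y : R) : 1 <= y -> clamp y = 1.
Proof. unfold clamp, Rmax, Rmin. repeat destruct Rle_dec; lra. Qed.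

Lemma clamped_eq (h : R -> R) (y : R) : Icl y -> clamped h y = h y.
Proof. intros Hy. unfold clamped. now rewrite clamp_id. Qed.

Lemma clamp_continuous (x : R) : continuous clamp x.
Proof.
  apply (continuous_of_local_bound _ _ 1). apply filter_forall. intros y.
  unfold clamp, Rmax, Rmin. repeat destruct Rle_dec; split_Rabs; lra.
Qed.

Lemma clamped_continuous (h : R -> R) :
  (forall y, Icl y -> filterlim h (within Icl (locally y)) (locally (h y))) ->
  forall x, continuous (clamped h) x.
Proof.
  intros Hh x. unfold continuous, clamped.
  apply filterlim_comp with (G := within Icl (locally (clamp x))); [| apply Hh, clamp_Icl].
  intros P HP. apply (clamp_continuous x) in HP. unfold filtermap in HP |- *.
  revert HP. apply filter_imp. intros y Hy. apply Hy, clamp_Icl.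
Qed.

Lemma clamped_derive (h : R -> R) (x l : R) :
  -1 < x < 1 -> is_derive h x l -> is_derive (clamped h) x l.
Proof.
  intros Hx. apply is_derive_ext_loc.
  apply (locally_interval _ x (-1) 1); simpl; try lra.
  intros y Hy1 Hy2. unfold clamped. rewrite clamp_id; [reflexivity | unfold Icl; lra].
Qed.

Definition gap_density (c k : R) (h : R -> R) (y : R) : R :=
  c * k / 9 * (k * h y ^ 2 + (3 * c * y - 2 * k) * h y).

Definition gap_square (c k : R) (h : R -> R) (y : R) : R :=
  c * k ^ 2 / 9 * (h y - (2 * k - 3 * c * y) / (2 * k)) ^ 2.

Lemma RInt_gap_density (c k : R) (h : R -> R) (a b : R) : 0 < k ->
  (forall x, continuous h x) ->
  RInt (gap_density c k h) a b
  = ((2 * k - 3 * c * b) ^ 3 - (2 * k - 3 * c * a) ^ 3) / 324 + RInt (gap_square c k h) a b.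
Proof.
  intros hk Hh.
  assert (Hpoly : RInt (fun y => - (c / 36) * (2 * k - 3 * c * y) ^ 2) a b
                  = ((2 * k - 3 * c * b) ^ 3 - (2 * k - 3 * c * a) ^ 3) / 324).
  { rewrite (RInt_of_derive (fun y => (2 * k - 3 * c * y) ^ 3 / 324)); [as_R_eq; field | |].
    - intros x. auto_derive; [exact I | field].
    - intros x. solve_continuous. }
  rewrite <- Hpoly.
  rewrite (RInt_ext (gap_density c k h)
             (fun y => 1 * (- (c / 36) * (2 * k - 3 * c * y) ^ 2) + 1 * gap_square c k h y)).
  - rewrite RInt_lincomb; [as_R_eq; ring | |]; apply ex_RInt_of_continuous; intros x;
      unfold gap_square; solve_continuous.
  - intros y _. unfold gap_density, gap_square. as_R_eq; field. lra.
Qed.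

Lemma gap_square_nonneg (c k : R) (h : R -> R) (y : R) : 0 < c -> 0 <= gap_square c k h y.
Proof.
  intros hc. unfold gap_square.
  apply Rmult_le_pos; [| apply pow2_ge_0].
  apply Rmult_le_pos; [apply Rmult_le_pos; [lra | apply pow2_ge_0] | lra].
Qed.

Lemma RInt_gap_square_ge_0 (c k : R) (h : R -> R) (a b : R) : 0 < c -> a <= b ->
  (forall x, continuous h x) -> 0 <= RInt (gap_square c k h) a b.
Proof.
  intros hc hab Hh. apply RInt_ge_0; [exact hab | |].
  - apply ex_RInt_of_continuous. intros x. unfold gap_square. solve_continuous.
  - intros x _. now apply gap_square_nonneg.
Qed.

(* Past [2 k / (3 c)] the density is positive, so the part of the integral
   that could reach the bound is the one over [[0, 2 k / (3 c)]]. *)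
Lemma RInt_gap_density_gt (c k : R) (h : R -> R) : 0 < c -> 0 < k -> 2 * k < 3 * c ->
  (forall x, continuous h x) -> (forall y, 0 < y < 1 -> 0 < h y) ->
  - 2 * k ^ 3 / 81 < RInt (gap_density c k h) 0 1.
Proof.
  intros hc hk hck Hh Hpos.
  set (y0 := 2 * k / (3 * c)).
  assert (Hy0 : 0 < y0 < 1).
  { unfold y0. split; [apply Rdiv_lt_0_compat; lra |].
    apply Rmult_lt_reg_r with (3 * c); [lra |]. field_simplify; lra. }
  assert (Hcont : forall x, continuous (gap_density c k h) x)
    by (intros x; unfold gap_density; solve_continuous).
  rewrite <- (RInt_Chasles (gap_density c k h) 0 y0 1);
    [| apply ex_RInt_of_continuous, Hcont ..].
  change plus with Rplus; simpl.
  rewrite RInt_gap_density by auto.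
  replace (2 * k - 3 * c * y0) with 0 by (unfold y0; field; lra).
  pose proof (RInt_gap_square_ge_0 c k h 0 y0 hc ltac:(lra) Hh).
  assert (0 < RInt (gap_density c k h) y0 1).
  { apply RInt_gt_0; [lra | | intros; apply Hcont].
    intros y Hy. pose proof (Hpos y ltac:(lra)).
    assert (2 * k < 3 * c * y).
    { replace (2 * k) with (3 * c * y0) by (unfold y0; field; lra). nra. }
    unfold gap_density. apply Rmult_lt_0_compat; [apply Rdiv_lt_0_compat; nra | nra]. }
  nra.
Qed.

Lemma RInt_gap_density_ge (c k : R) (h : R -> R) : 0 < c -> 0 < k ->
  (forall x, continuous h x) -> (forall y, 0 < y < 1 -> 0 < h y) ->
  - 2 * k ^ 3 / 81 <= RInt (gap_density c k h) 0 1 /\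
  (RInt (gap_density c k h) 0 1 = - 2 * k ^ 3 / 81 ->
   3 * c = 2 * k /\ forall y, 0 < y < 1 -> h y = 1 - y).
Proof.
  intros hc hk Hh Hpos.
  destruct (Rlt_or_le (2 * k) (3 * c)) as [hck | hck].
  { pose proof (RInt_gap_density_gt c k h hc hk hck Hh Hpos). split; [lra | intros; lra]. }
  rewrite RInt_gap_density by auto.
  pose proof (RInt_gap_square_ge_0 c k h 0 1 hc ltac:(lra) Hh).
  assert (0 <= (2 * k - 3 * c * 1) ^ 3) by (apply pow_le; lra).
  split; [nra | intros Heq].
  assert (Hck : 3 * c = 2 * k).
  { destruct (Req_dec (2 * k - 3 * c * 1) 0) as [| Hne]; [lra |].
    pose proof (pow_nonzero _ 3 Hne). nra. }
  split; [exact Hck |].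
  intros y Hy.
  assert (Hsq : gap_square c k h y = 0).
  { apply (RInt_nonneg_eq_0 _ 0 1); auto; try lra.
    - intros x. unfold gap_square. solve_continuous.
    - intros x _. now apply gap_square_nonneg. }
  unfold gap_square in Hsq.
  replace (2 * k - 3 * c * y) with (2 * k * (1 - y)) in Hsq by (rewrite <- Hck; ring).
  replace (2 * k * (1 - y) / (2 * k)) with (1 - y) in Hsq by (field; lra).
  assert (0 < c * k ^ 2 / 9) by (apply Rdiv_lt_0_compat; [apply Rmult_lt_0_compat; nra | lra]).
  apply Rmult_integral in Hsq as [| Hsq]; [lra |].
  destruct (Req_dec (h y - (1 - y)) 0) as [| Hne]; [lra |].
  now destruct (pow_nonzero _ 2 Hne).
Qed.

Lemma sqr_div_ge_linear (F D mu : R) : 0 < D -> - 2 * mu * F - mu ^ 2 * D <= F ^ 2 / D.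
Proof.
  intros HD.
  assert (Hsq : F ^ 2 / D + 2 * mu * F + mu ^ 2 * D = (F + mu * D) ^ 2 / D) by (field; lra).
  assert (0 <= (F + mu * D) ^ 2 / D)
    by (apply Rdiv_le_0_compat; [apply pow2_ge_0 | exact HD]).
  lra.
Qed.

Definition I1_density (f df : R -> R) (y : R) : R := Fprim df y ^ 2 / (1 - f y ^ 2).

Section ClassF.

Variables f df : R -> R.
Hypothesis Hf : inF f df.

Local Notation u := (clamped f).
Local Notation du := (clamped df).
Local Notation Fu := (Fprim (clamped df)).

Lemma u_continuous (x : R) : continuous u x.
Proof. destruct Hf as [[Hc _] _]. exact (clamped_continuous f Hc x). Qed.

Lemma du_continuous (x : R) : continuous du x.
Proof. destruct Hf as [[_ [_ Hc]] _]. exact (clamped_continuous df Hc x). Qed.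

Lemma u_derive (x : R) : -1 < x < 1 -> is_derive u x (du x).
Proof.
  intros Hx. destruct Hf as [[_ [Hd _]] _].
  rewrite clamped_eq by (unfold Icl; lra). now apply clamped_derive, Hd.
Qed.

Lemma u_range (y : R) : -1 < y < 1 -> -1 < u y < 1.
Proof.
  intros Hy. destruct Hf as [_ [_ [_ [_ [_ [Hr _]]]]]].
  rewrite clamped_eq by (unfold Icl; lra). now apply Hr.
Qed.

Lemma u_ge_1 (y : R) : 1 <= y -> u y = 1.
Proof. intros Hy. unfold clamped. rewrite clamp_ge_1 by exact Hy. apply Hf. Qed.

Lemma u_bounded (y : R) : -1 <= u y <= 1.
Proof.
  destruct Hf as [_ [Hm1 [H1 _]]]. unfold clamped.
  destruct (clamp_Icl y) as [[Hlo | Hlo] [Hhi | Hhi]].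
  - pose proof (u_range (clamp y) (conj Hlo Hhi)) as Hr.
    rewrite clamped_eq in Hr by apply clamp_Icl. lra.
  - rewrite Hhi, H1. lra.
  - rewrite <- Hlo, Hm1. lra.
  - rewrite Hhi, H1. lra.
Qed.

Lemma Fu_derive (x : R) : is_derive Fu x (du x * x).
Proof.
  pose proof du_continuous.
  apply (is_derive_RInt_upper (fun s => du s * s)). intros y. solve_continuous.
Qed.

Lemma Fu_continuous (x : R) : continuous Fu x.
Proof. pose proof du_continuous. apply continuous_RInt_upper. intros y. solve_continuous. Qed.

(* Integration by parts: [F(1) = [s f(s)]_{-1}^{1} - \int_{-1}^{1} f = 0],
   the last integral vanishing because [f] is odd. *)
Lemma Fu_1 : Fu 1 = 0.
Proof.
  destruct Hf as [_ [Hm1 [H1 [_ [_ [_ Hodd]]]]]].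
  pose proof u_continuous as Hu. pose proof du_continuous.
  assert (HIu : forall x, continuous (RInt u (-1)) x) by (intros; now apply continuous_RInt_upper).
  assert (Hodd_int : RInt u (-1) 1 = 0).
  { apply (RInt_odd u 1); [lra | now apply ex_RInt_of_continuous |].
    intros y Hy. rewrite !clamped_eq by (unfold Icl; lra). apply Hodd. lra. }
  unfold Fprim.
  rewrite (RInt_interior_derive (fun s => s * u s - RInt u (-1) s)); [| lra | | | ].
  - rewrite Hodd_int, RInt_point, !clamped_eq by (unfold Icl; lra).
    rewrite Hm1, H1. change (@zero R_CompleteNormedModule) with 0. as_R_eq; ring.
  - intros x _. solve_continuous.
  - intros x. solve_continuous.
  - intros x Hx. auto_derive.
    + repeat split; [now exists (du x); apply u_derive | now apply ex_RInt_of_continuous |].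
      apply filter_forall. intros y. apply continuity_pt_filterlim, Hu.
    + replace (Derive (fun y : R => u y) x) with (du x)
        by (symmetry; now apply is_derive_unique, u_derive).
      ring.
Qed.

(* [y F(y) - y^2 f(y) + y^2] is a primitive of the integrand on [(0, 1)]. *)
Lemma RInt_Fu_moment : RInt (fun y => Fu y + 2 * ((1 - u y) * y)) 0 1 = 0.
Proof.
  pose proof u_continuous. pose proof Fu_continuous.
  rewrite (RInt_interior_derive (fun y => y * Fu y - y ^ 2 * u y + y ^ 2)); [| lra | | |].
  - cbv beta. rewrite Fu_1, (u_ge_1 1) by lra. as_R_eq; ring.
  - intros x _. solve_continuous.
  - intros x. solve_continuous.
  - intros x Hx. auto_derive.
    + split; [eexists; apply Fu_derive |]. split; [| exact I]. eexists. apply u_derive; lra.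
    + replace (Derive (fun y : R => Fu y) x) with (du x * x)
        by (symmetry; apply is_derive_unique, Fu_derive).
      replace (Derive (fun y : R => u y) x) with (du x)
        by (symmetry; apply is_derive_unique, u_derive; lra).
      ring.
Qed.

Lemma I1_density_nonneg (y : R) : 0 <= I1_density u du y.
Proof.
  unfold I1_density. pose proof (u_bounded y).
  destruct (Req_dec (1 - u y ^ 2) 0) as [Hz | Hnz].
  - rewrite Hz, Rdiv_0_r. lra.
  - apply Rdiv_le_0_compat; [apply pow2_ge_0 | nra].
Qed.

(* Near [1]: [|F(y)| <= M (1 - y)] whereas [1 - f(y)^2 >= 1 - f(y) >= m (1 - y)]. *)
Lemma I1_density_le_near_1 (y m M : R) : 0 <= y < 1 -> 0 < m -> M * (1 - y) < 1 ->
  (forall s, y < s < 1 -> m <= du s <= M) -> I1_density u du y <= M ^ 2 / m * (1 - y).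
Proof.
  intros Hy hm HM Hb.
  pose proof du_continuous as Hdu.
  assert (Hcont : forall x, continuous (fun s => du s * s) x) by (intros; solve_continuous).
  assert (Hgap : 1 - u y = RInt du y 1).
  { rewrite (RInt_interior_derive u du y 1); [| lra | intros; apply u_continuous | auto |].
    - rewrite (u_ge_1 1) by lra. ring.
    - intros x Hx. apply u_derive. lra. }
  assert (HF : - Fu y = RInt (fun s => du s * s) y 1).
  { pose proof Fu_1 as HF1. unfold Fprim in HF1 |- *.
    rewrite <- (RInt_Chasles _ (-1) y 1) in HF1 by now apply ex_RInt_of_continuous.
    change plus with Rplus in HF1. simpl in HF1. lra. }
  pose proof (RInt_le_bounds du y 1 m M ltac:(lra) Hdu Hb) as Hgap_bounds.
  pose proof (RInt_le_bounds (fun s => du s * s) y 1 0 M ltac:(lra) Hcont) as HF_bounds.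
  rewrite <- Hgap in Hgap_bounds. rewrite <- HF in HF_bounds.
  specialize (HF_bounds (fun s Hs => ltac:(pose proof (Hb s Hs); split; nra))).
  assert (Hden : m * (1 - y) <= 1 - u y ^ 2).
  { assert (0 <= u y * (1 - u y)) by (apply Rmult_le_pos; nra). nra. }
  assert (Hnum : Fu y ^ 2 <= M ^ 2 * (1 - y) ^ 2) by nra.
  assert (HK : 0 <= M ^ 2 / m) by (apply Rdiv_le_0_compat; [apply pow2_ge_0 | lra]).
  unfold I1_density. apply Rle_div_l.
  - apply Rlt_le_trans with (m * (1 - y)); [apply Rmult_lt_0_compat |]; lra.
  - apply Rle_trans with (M ^ 2 * (1 - y) ^ 2); [exact Hnum |].
    replace (M ^ 2 * (1 - y) ^ 2) with (M ^ 2 / m * (1 - y) * (m * (1 - y))) by (field; lra).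
    apply Rmult_le_compat_l; [apply Rmult_le_pos |]; lra.
Qed.

Lemma I1_density_at_1 : I1_density u du 1 = 0.
Proof. unfold I1_density. rewrite Fu_1. unfold Rdiv. ring. Qed.

(* Beyond [1] the density vanishes: the denominator is [0] and [x / 0 = 0]. *)
Lemma I1_density_ge_1 (y : R) : 1 <= y -> I1_density u du y = 0.
Proof.
  intros Hy. unfold I1_density. rewrite (u_ge_1 y Hy).
  replace (1 - 1 ^ 2) with 0 by ring. apply Rdiv_0_r.
Qed.

Lemma I1_density_continuous_at_1 : continuous (I1_density u du) 1.
Proof.
  assert (HD : 0 < du 1).
  { rewrite clamped_eq by (unfold Icl; lra). apply Hf. }
  set (D := du 1) in *.
  destruct (proj1 (filterlim_locally _ _) (du_continuous 1) (mkposreal (D / 2) ltac:(lra)))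
    as [d Hd].
  pose proof (cond_pos d).
  assert (Hdelta : 0 < Rmin d (Rmin (1 / 2) (1 / (3 * D)))).
  { repeat apply Rmin_pos; try lra. apply Rdiv_lt_0_compat; lra. }
  apply (continuous_of_local_bound _ _ (9 * D / 2)).
  exists (mkposreal _ Hdelta). intros y Hy.
  apply (proj1 (ball_Rabs _ _ _)) in Hy. simpl in Hy.
  pose proof (Rmin_l d (Rmin (1 / 2) (1 / (3 * D)))).
  pose proof (Rmin_r d (Rmin (1 / 2) (1 / (3 * D)))).
  pose proof (Rmin_l (1 / 2) (1 / (3 * D))). pose proof (Rmin_r (1 / 2) (1 / (3 * D))).
  rewrite I1_density_at_1, Rminus_0_r.
  destruct (Rle_or_lt 1 y) as [Hy1 | Hy1].
  { rewrite I1_density_ge_1, Rabs_R0 by exact Hy1.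
    apply Rmult_le_pos; [lra | apply Rabs_pos]. }
  apply Rabs_def2 in Hy.
  assert (H3D : 3 * D / 2 * (1 - y) < 1).
  { apply Rlt_le_trans with (3 * D / 2 * (1 / (3 * D))); [apply Rmult_lt_compat_l; lra |].
    replace (3 * D / 2 * (1 / (3 * D))) with (1 / 2) by (field; lra). lra. }
  assert (Hnear : forall s, y < s < 1 -> D / 2 <= du s <= 3 * D / 2).
  { intros s Hs.
    assert (Hs1 : Rabs (du s - D) < D / 2) by (apply Hd, (proj2 (ball_Rabs _ _ _)), Rabs_def1; lra).
    apply Rabs_def2 in Hs1. lra. }
  pose proof (I1_density_le_near_1 y (D / 2) (3 * D / 2) ltac:(lra) ltac:(lra) H3D Hnear)
    as Hbound.
  rewrite Rabs_pos_eq by apply I1_density_nonneg.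
  rewrite Rabs_minus_sym, Rabs_pos_eq by lra.
  replace (9 * D / 2) with ((3 * D / 2) ^ 2 / (D / 2)) by (field; lra).
  exact Hbound.
Qed.

Lemma I1_density_continuous (x : R) : 0 <= x <= 1 -> continuous (I1_density u du) x.
Proof.
  intros Hx. destruct (Req_dec x 1) as [-> | Hx1]; [exact I1_density_continuous_at_1 |].
  pose proof (u_range x ltac:(lra)). pose proof u_continuous. pose proof Fu_continuous.
  unfold I1_density, Rdiv.
  apply (@continuous_mult R_UniformSpace R_AbsRing); [solve_continuous |].
  apply continuous_Rinv_comp; [solve_continuous | nra].
Qed.

Lemma I1_clamped : I1 f df = RInt (I1_density u du) 0 1.
Proof.
  apply RInt_ext. rewrite Rmin_left, Rmax_right by lra. intros y Hy.
  unfold I1_density. rewrite clamped_eq by (unfold Icl; lra). do 2 f_equal.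
  apply RInt_ext. rewrite Rmin_left, Rmax_right by lra. intros s Hs.
  rewrite clamped_eq by (unfold Icl; lra). reflexivity.
Qed.

Lemma I2_clamped : I2 f = RInt (fun y => (1 - u y) * y) 0 1.
Proof.
  apply RInt_ext. rewrite Rmin_left, Rmax_right by lra. intros y Hy.
  rewrite clamped_eq by (unfold Icl; lra). reflexivity.
Qed.

(* The multiplier [mu = k / (3 c)] is the one for which the bound is an
   equality at [f = id], [3 c = 2 k]. *)
Lemma gap_density_le_integrand (c k y : R) : 0 < c -> 0 < y < 1 ->
  gap_density c k (fun y => 1 - u y) y - 2 * c ^ 2 * k / 3 * (Fu y + 2 * ((1 - u y) * y))
  <= c ^ 3 * I1_density u du y - c ^ 2 * k * ((1 - u y) * y).
Proof.
  intros hc Hy. pose proof (u_range y ltac:(lra)).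
  set (mu := k / (3 * c)).
  pose proof (sqr_div_ge_linear (Fu y) (1 - u y ^ 2) mu ltac:(nra)) as Hsq.
  assert (Hc3 : 0 < c ^ 3) by (apply pow_lt; lra).
  unfold gap_density, I1_density. set (Q := Fu y ^ 2 / (1 - u y ^ 2)) in *.
  assert (Hid : c ^ 3 * Q - c ^ 2 * k * ((1 - u y) * y)
                - (c * k / 9 * (k * (1 - u y) ^ 2 + (3 * c * y - 2 * k) * (1 - u y))
                   - 2 * c ^ 2 * k / 3 * (Fu y + 2 * ((1 - u y) * y)))
                = c ^ 3 * (Q - (- 2 * mu * Fu y - mu ^ 2 * (1 - u y ^ 2))))
    by (unfold mu; field; lra).
  assert (0 <= c ^ 3 * (Q - (- 2 * mu * Fu y - mu ^ 2 * (1 - u y ^ 2))))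
    by (apply Rmult_le_pos; lra).
  lra.
Qed.

Lemma RInt_gap_density_le_energy (c k : R) : 0 < c ->
  RInt (gap_density c k (fun y => 1 - u y)) 0 1 <= c ^ 3 * I1 f df - c ^ 2 * k * I2 f.
Proof.
  intros hc. rewrite I1_clamped, I2_clamped.
  pose proof u_continuous. pose proof Fu_continuous.
  assert (HQ : ex_RInt (I1_density u du) 0 1).
  { apply (ex_RInt_continuous (V := R_CompleteNormedModule)).
    rewrite Rmin_left, Rmax_right by lra. apply I1_density_continuous. }
  assert (Hh : ex_RInt (fun y => (1 - u y) * y) 0 1)
    by (apply ex_RInt_of_continuous; intros; solve_continuous).
  assert (Hm : ex_RInt (fun y => Fu y + 2 * ((1 - u y) * y)) 0 1)
    by (apply ex_RInt_of_continuous; intros; solve_continuous).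
  assert (HE : ex_RInt (gap_density c k (fun y => 1 - u y)) 0 1)
    by (apply ex_RInt_of_continuous; intros; unfold gap_density; solve_continuous).
  replace (c ^ 3 * RInt (I1_density u du) 0 1 - c ^ 2 * k * RInt (fun y => (1 - u y) * y) 0 1)
    with (RInt (fun y => c ^ 3 * I1_density u du y + - (c ^ 2 * k) * ((1 - u y) * y)) 0 1)
    by (rewrite RInt_lincomb by assumption; as_R_eq; ring).
  replace (RInt (gap_density c k (fun y => 1 - u y)) 0 1)
    with (RInt (fun y => 1 * gap_density c k (fun y => 1 - u y) y
                         + - (2 * c ^ 2 * k / 3) * (Fu y + 2 * ((1 - u y) * y))) 0 1)
    by (rewrite RInt_lincomb, RInt_Fu_moment by assumption; as_R_eq; ring).
  apply RInt_le; [lra | | |].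
  - apply ex_RInt_of_continuous. intros. unfold gap_density. solve_continuous.
  - apply (ex_RInt_continuous (V := R_CompleteNormedModule)).
    rewrite Rmin_left, Rmax_right by lra. intros z Hz.
    pose proof (I1_density_continuous z Hz). solve_continuous.
  - intros y Hy. pose proof (gap_density_le_integrand c k y hc Hy). lra.
Qed.

Lemma eq_id_of_eq_id_on_01 : (forall y, 0 < y < 1 -> f y = y) -> forall y, Icl y -> f y = y.
Proof.
  destruct Hf as [_ [Hm1 [H1 [_ [_ [_ Hodd]]]]]].
  intros Hpos y [Hlo Hhi].
  destruct Hhi as [Hhi | ->]; [| exact H1].
  destruct Hlo as [Hlo | <-]; [| exact Hm1].
  destruct (Rtotal_order y 0) as [Hy | [-> | Hy]].
  - pose proof (Hodd (- y) ltac:(lra)) as Hneg.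
    rewrite Ropp_involutive, (Hpos (- y)) in Hneg by lra. lra.
  - pose proof (Hodd 0 ltac:(lra)) as H0. rewrite Ropp_0 in H0. lra.
  - apply Hpos. lra.
Qed.

Lemma energy_lower_bound (c k : R) : 0 < c -> 0 < k ->
  - 2 * k ^ 3 / 81 <= c ^ 3 * I1 f df - c ^ 2 * k * I2 f /\
  (c ^ 3 * I1 f df - c ^ 2 * k * I2 f = - 2 * k ^ 3 / 81 ->
   3 * c = 2 * k /\ forall y, Icl y -> f y = y).
Proof.
  intros hc hk.
  pose proof (RInt_gap_density_le_energy c k hc).
  destruct (RInt_gap_density_ge c k (fun y => 1 - u y) hc hk) as [Hge Heq].
  - pose proof u_continuous. intros x. solve_continuous.
  - intros y Hy. pose proof (u_range y ltac:(lra)). lra.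
  - split; [lra |]. intros Hmin.
    destruct (Heq ltac:(lra)) as [Hck Hid]. split; [exact Hck |].
    apply eq_id_of_eq_id_on_01. intros y Hy.
    specialize (Hid y Hy). rewrite clamped_eq in Hid by (unfold Icl; lra). lra.
Qed.

End ClassF.

Lemma inF_id : inF (fun y => y) (fun _ => 1).
Proof.
  split; [split; [| split] |].
  - intros y _. eapply filterlim_filter_le_1; [apply filter_le_within | apply filterlim_id].
  - intros y _. auto_derive; [exact I | ring].
  - intros y _. apply filterlim_const.
  - repeat split; intros; lra.
Qed.

Lemma I1_id : I1 (fun y => y) (fun _ => 1) = 1 / 6.
Proof.
  unfold I1. rewrite (RInt_ext _ (fun y => (1 - y ^ 2) / 4)).
  - rewrite (RInt_of_derive (fun y => (y - y ^ 3 / 3) / 4)); [as_R_eq; field | |].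
    + intros x. auto_derive; [exact I | field].
    + intros x. solve_continuous.
  - rewrite Rmin_left, Rmax_right by lra. intros x Hx.
    assert (HF : Fprim (fun _ => 1) x = (x ^ 2 - 1) / 2).
    { unfold Fprim. rewrite (RInt_of_derive (fun s => s ^ 2 / 2)); [as_R_eq; field | |].
      - intros s. auto_derive; [exact I | field].
      - intros s. solve_continuous. }
    rewrite HF. as_R_eq. field. nra.
Qed.

Lemma I2_id : I2 (fun y => y) = 1 / 6.
Proof.
  unfold I2. rewrite (RInt_of_derive (fun y => y ^ 2 / 2 - y ^ 3 / 3)); [as_R_eq; field | |].
  - intros x. auto_derive; [exact I | field].
  - intros x. solve_continuous.
Qed.

Theorem lemma4p3 (g A : R) (hg : 0 < g) (hA0 : 0 < A) (hA1 : A < 1) :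
  inF (fun y => y) (fun _ => 1) /\
  forall (f df : R -> R) (c : R), inF f df -> 0 <= c ->
    Jt g A (fun y => y) (fun _ => 1) (2/3 * g * A) <= Jt g A f df c /\
    (Jt g A f df c = Jt g A (fun y => y) (fun _ => 1) (2/3 * g * A) ->
       c = 2/3 * g * A /\ forall y, -1 <= y <= 1 -> f y = y).
Proof.
  split; [exact inF_id |].
  intros f df c Hf hc.
  set (k := g * A). assert (hk : 0 < k) by (unfold k; nra).
  assert (Hk3 : 0 < k ^ 3) by (apply pow_lt; lra).
  assert (Hopt : Jt g A (fun y => y) (fun _ => 1) (2/3 * g * A) = - k ^ 3 / 81)
    by (unfold Jt, k; rewrite I1_id, I2_id; field).
  assert (HJ : Jt g A f df c = 1/2 * (c ^ 3 * I1 f df - c ^ 2 * k * I2 f))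
    by (unfold Jt, k; ring).
  rewrite Hopt, HJ.
  destruct (Req_dec c 0) as [-> | hc0].
  - replace (1/2 * (0 ^ 3 * I1 f df - 0 ^ 2 * k * I2 f)) with 0 by ring.
    split; intros; lra.
  - destruct (energy_lower_bound f df Hf c k ltac:(lra) hk) as [Hge Heq].
    split; [lra |]. intros Hmin.
    destruct (Heq ltac:(lra)) as [Hck Hid].
    split; [unfold k in Hck; lra | exact Hid].
Qed.
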